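(* Let $k$ be a field of characteristic $p>0$. Any nontrivial infinitesimal unipotent subgroup scheme of $\mathrm{GL}_{2,k}$ is equal to one of the following subgroup schemes of $\mathrm{SL}_{2,k}$: $$H_{s_1,s_2,n}=\Big\{\begin{pmatrix} x_{11}&x_{12}\\ x_{21}&x_{22}\end{pmatrix}\in \ker F^n_{\mathrm{SL}_{2,k}} \;\Big|\; s_i(x_{ii}-1)+s_j x_{ij}=0 \text{ for } (i,j)=(1,2),(2,1),\ x_{22}=2-x_{11}\Big\},$$ for some $[s_1:s_2]\in\mathbb{P}^1(k)$ and some $n\ge1$. *)

From HB Require Import structures.
From mathcomp Require Import all_boot all_algebra.
From mathcomp Require Import mpoly.
Set Implicit Arguments. Unset Strict Implicit. Unset Printing Implicit Defensive.
Import GRing.Theory.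
Local Open Scope ring_scope.

(* Coordinate ring k[x11,x12,x21,x22] = {mpoly k[4]}; variable index 2*i+j
   (i,j in {0,1}) stands for x_{(i+1)(j+1)}.
   k[GL2 x GL2] coordinates (without det^{-1}) = {mpoly k[8]}: indices 0..3 for the
   left factor, 4..7 for the right factor. *)

Section GL2.
Variable k : fieldType.

Definition xv (i j : nat) : {mpoly k[4]} := 'X_(inord (i * 2 + j)).
Definition xl (i j : nat) : {mpoly k[8]} := 'X_(inord (i * 2 + j)).
Definition xr (i j : nat) : {mpoly k[8]} := 'X_(inord (4 + (i * 2 + j))).

(* f |-> f (x) 1 and f |-> 1 (x) f *)
Definition inlt : 4.-tuple {mpoly k[8]} := [tuple xl (t %/ 2) (t %% 2) | t < 4].
Definition inrt : 4.-tuple {mpoly k[8]} := [tuple xr (t %/ 2) (t %% 2) | t < 4].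
Definition comult : 4.-tuple {mpoly k[8]} :=
  [tuple xl (t %/ 2) 0 * xr 0 (t %% 2) + xl (t %/ 2) 1 * xr 1 (t %% 2) | t < 4].
Definition unit_pt : 'I_4 -> k := fun t => if (val t == 0)%N || (val t == 3)%N then 1 else 0.
Definition counit (f : {mpoly k[4]}) : k := f.@[unit_pt].

Definition detp : {mpoly k[4]} := xv 0 0 * xv 1 1 - xv 0 1 * xv 1 0.
(* antipode, valid modulo an ideal containing x_ij^(p^n) - delta_ij,
   where det^(-1) = det^(p^n - 1) *)
Definition antipt (q : nat) : 4.-tuple {mpoly k[4]} :=
  [tuple (if val t == 0 then xv 1 1 else if val t == 1 then - xv 0 1
          else if val t == 2 then - xv 1 0 else xv 0 0) * detp ^+ q.-1 | t < 4].

Definition delta (i j : nat) : {mpoly k[4]} := if i == j then 1 else 0.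

Definition is_ideal (I : {mpoly k[4]} -> Prop) : Prop :=
  [/\ I 0, (forall f g, I f -> I g -> I (f + g)) & (forall a f, I f -> I (a * f))].

(* the ideal I (x) A + A (x) I of k[x] (x) k[x] *)
Definition in_Jideal (I : {mpoly k[4]} -> Prop) (h : {mpoly k[8]}) : Prop :=
  exists (m : nat) (a b : 'I_m -> {mpoly k[8]}) (f g : 'I_m -> {mpoly k[4]}),
    [/\ forall i, I (f i), forall i, I (g i) &
        h = \sum_(i < m) (a i * (f i \mPo inlt) + b i * (g i \mPo inrt))].

Definition in_frob_kernel (p n : nat) (I : {mpoly k[4]} -> Prop) : Prop :=
  forall i j, (i < 2)%N -> (j < 2)%N -> I (xv i j ^+ (p ^ n) - delta i j).

Definition infinitesimal_subgroup (p : nat) (I : {mpoly k[4]} -> Prop) : Prop :=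
  is_ideal I /\
  exists n : nat, [/\ in_frob_kernel p n I,
    (forall f, I f -> counit f = 0),
    (forall f, I f -> in_Jideal I (f \mPo comult)) &
    (forall f, I f -> I (f \mPo antipt (p ^ n)))].

(* finite-dimensional comodule over k[G] = k[x]/I, given by a matrix of
   coefficients rho (representatives in k[x]) *)
Definition is_comodule (I : {mpoly k[4]} -> Prop) (m : nat)
  (rho : 'I_m -> 'I_m -> {mpoly k[4]}) : Prop :=
  (forall i j, in_Jideal I ((rho i j \mPo comult) -
      \sum_(l < m) (rho i l \mPo inlt) * (rho l j \mPo inrt))) /\
  (forall i j, counit (rho i j) = (i == j)%:R).

(* unipotent: every nonzero finite-dimensional representation has a nonzero
   fixed vector *)
Definition unipotent (I : {mpoly k[4]} -> Prop) : Prop :=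
  forall (m : nat) (rho : 'I_m -> 'I_m -> {mpoly k[4]}), (0 < m)%N ->
    is_comodule I rho ->
    exists v : 'I_m -> k, (exists i, v i != 0) /\
      forall i, I (\sum_(j < m) (v j)%:MP * rho i j - (v i)%:MP).

(* G is not the trivial group: I differs from the augmentation ideal *)
Definition nontrivial_sub (I : {mpoly k[4]} -> Prop) : Prop :=
  exists f, counit f = 0 /\ ~ I f.

Definition in_ideal_gen (gs : seq {mpoly k[4]}) (f : {mpoly k[4]}) : Prop :=
  exists cs : 'I_(size gs) -> {mpoly k[4]},
    f = \sum_(i < size gs) cs i * nth 0 gs i.

Definition H_gens (p : nat) (s1 s2 : k) (n : nat) : seq {mpoly k[4]} :=
  [:: xv 0 0 ^+ (p ^ n) - 1; xv 0 1 ^+ (p ^ n); xv 1 0 ^+ (p ^ n);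
      xv 1 1 ^+ (p ^ n) - 1; detp - 1;
      s1%:MP * (xv 0 0 - 1) + s2%:MP * xv 0 1;
      s2%:MP * (xv 1 1 - 1) + s1%:MP * xv 1 0;
      xv 1 1 - (2 - xv 0 0)].

End GL2.

From HB Require Import structures.
From mathcomp Require Import all_boot all_algebra.
From mathcomp Require Import mpoly ring.
From Stdlib Require Import Classical.
Set Implicit Arguments. Unset Strict Implicit. Unset Printing Implicit Defensive.
Import GRing.Theory.
Local Open Scope ring_scope.

(* Unipotence applied to the standard representation gives a vector v = (s1, s2)
   fixed by G, and applied to the determinant gives det = 1 on G; together these
   force x22 = 2 - x11.  These relations cut out the one-parameter subgroup
   t |-> 1 + t N, where N is the nilpotent matrix with kernel spanned by v, so
   pulling back along it identifies k[G] with k[t] / phi(I); phi(I) contains a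
   power of t because G lies in a Frobenius kernel, hence phi(I) = (t^m).  The
   counit and the nontriviality of G give m > 1.  Under phi the comultiplication
   becomes t |-> t (x) 1 + 1 (x) t, so (s + t)^m lies in (s^m, t^m): all C(m, j)
   with 0 < j < m vanish in k, which forces m = p^n.  The ideal of H_{s1,s2,n} is
   also the preimage of (t^(p^n)). *)

Lemma pchar_nat_pow (R : nzRingType) p n : p \in [pchar R] -> [pchar R].-nat (p ^ n)%N.
Proof. by move=> hp; rewrite pnatX (pnatE _ (pcharf_prime hp)) hp. Qed.

Lemma eq_of_subr_mul1B (R : pzRingType) (e x y q : R) :
  e = 1 -> x - y = (1 - e) * q -> x = y.
Proof. by move=> -> /eqP; rewrite subrr mul0r subr_eq0 => /eqP. Qed.

Lemma mpoly_ring_ind n (R : nzRingType) (P : {mpoly R[n]} -> Prop) :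
  (forall c, P c%:MP) -> (forall i, P 'X_i) ->
  (forall p q, P p -> P q -> P (p + q)) -> (forall p q, P p -> P q -> P (p * q)) ->
  forall p, P p.
Proof.
move=> PC PX PD PM; elim/mpolyind=> [|c m q _ _ Pq]; first by rewrite -mpolyC0.
apply: (PD) => //; rewrite -mul_mpolyC; apply: (PM) => //; rewrite mpolyXE_id.
have P1 : P 1 by rewrite -mpolyC1.
apply: (big_ind P) => [//|x y|i _]; first exact: (PM).
by elim: (m i) => [|e IHe]; rewrite ?expr0 // exprS; apply: (PM).
Qed.

Lemma mpoly_rmorph_ext n (R S : nzRingType) (F G : {rmorphism {mpoly R[n]} -> S}) :
  (forall c, F c%:MP = G c%:MP) -> (forall i, F 'X_i = G 'X_i) -> F =1 G.
Proof.
move=> FGC FGX; apply: mpoly_ring_ind => // p q FGp FGq.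
  by rewrite !rmorphD FGp FGq.
by rewrite !rmorphM FGp FGq.
Qed.

Lemma ex_minn_classic (P : nat -> Prop) : (exists n, P n) ->
  exists m, P m /\ forall j, P j -> (m <= j)%N.
Proof.
move=> exP; have [m [[Pm minm] _]] :=
  Wf_nat.dec_inh_nat_subset_has_unique_least_element P (fun n => classic (P n)) exP.
by exists m; split=> // j /minm /leP.
Qed.

Lemma ideal_Xpow_principal (k : fieldType) (Q : {poly k} -> Prop) q :
  (forall a b, Q a -> Q b -> Q (a + b)) -> (forall a b, Q b -> Q (a * b)) -> Q 'X^q ->
  exists m, Q 'X^m /\ forall g, Q g -> 'X^m %| g.
Proof.
move=> QD QM Qq.
have [m [Qm minm]] := ex_minn_classic (ex_intro (fun j => Q 'X^j) q Qq).
exists m; split=> // g Qg.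
have [[a b] /= gcd_ab] := Bezoutp g 'X^q.
have : a * g + b * 'X^q %| ('X - 0%:P) ^+ q.
  by rewrite polyC0 subr0 (eqp_dvdl _ gcd_ab) dvdp_gcdr.
case/dvdp_exp_XsubCP => j _; rewrite polyC0 subr0 => Xj_eqp.
have /minm le_mj : Q 'X^j.
  have /eqpP[[c1 c2] /= /andP[_ c2n] hc] := Xj_eqp.
  suff -> : 'X^j = (c2^-1 * c1)%:P * (a * g + b * 'X^q) by apply/QM/QD; apply: QM.
  by rewrite mul_polyC -scalerA hc scalerA mulVf // scale1r.
apply: dvdp_trans (dvdp_exp2l 'X le_mj) _.
by rewrite -(eqp_dvdl _ Xj_eqp) (eqp_dvdl _ gcd_ab) dvdp_gcdl.
Qed.

Lemma coef_CXD_exp (R : comNzRingType) (c : R) m k :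
  ((c%:P + 'X) ^+ m)`_k = c ^+ (m - k) *+ 'C(m, k).
Proof.
rewrite exprDn (eq_bigr (fun i : 'I_m.+1 => (c ^+ (m - i) *+ 'C(m, i)) *: 'X^i)); last first.
  by move=> i _; rewrite -rmorphXn mul_polyC scalerMnl.
rewrite coef_sumMXn (big_ord1_eq _ (fun i => c ^+ (m - i) *+ 'C(m, i))) ltnS.
case: leqP => // /bin_small->.
by rewrite mulr0n.
Qed.

Lemma pchar_binomial_mul_pow (R : comNzRingType) p e m : p \in [pchar R] ->
  'C(m * p ^ e, p ^ e)%:R = m%:R :> R.
Proof.
move=> hp; set q := (p ^ e)%N.
have q_gt0 : (0 < q)%N by rewrite expn_gt0 prime_gt0 // (pcharf_prime hp).
have hpX : p \in [pchar {poly R}] by rewrite pchar_poly.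
have := coef_CXD_exp (1 : R) (m * q) q; rewrite expr1n => <-.
rewrite mulnC exprM exprDn_pchar ?pchar_nat_pow // -rmorphXn expr1n.
have -> : (1%:P + 'X^q : {poly R}) ^+ m = ((1%:P + 'X) ^+ m) \Po 'X^q.
  elim: m => [|m IH]; first by rewrite !expr0 comp_polyC.
  by rewrite !exprS comp_polyM -IH comp_polyD comp_polyC comp_polyX.
by rewrite coef_comp_poly_Xn // dvdnn divnn q_gt0 coef_CXD_exp expr1n bin1.
Qed.

Lemma binomial_coef_vanish (R : comNzRingType) m j (A B : {poly {poly R}}) :
  (0 < j < m)%N -> ('Y + 'X) ^+ m = A * 'Y ^+ m + B * 'X ^+ m ->
  'C(m, j)%:R = 0 :> R.
Proof.
move=> /andP[j_gt0 lt_jm] /(congr1 (fun P : {poly {poly R}} => P`_j`_(m - j))).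
rewrite coef_CXD_exp coefMn coefXn eqxx mulr1n => ->.
rewrite coefD -rmorphXn coefMC coefMXn lt_jm addr0 coefMXn.
by rewrite ltn_subrL j_gt0 (ltn_trans j_gt0 lt_jm).
Qed.

Lemma pchar_pow_of_binomials (R : comNzRingType) p m : p \in [pchar R] -> (1 < m)%N ->
  (forall j, (0 < j < m)%N -> 'C(m, j)%:R = 0 :> R) -> exists2 n, (0 < n)%N & m = (p ^ n)%N.
Proof.
move=> hp m_gt1 Cm0; have p_prime := pcharf_prime hp.
have [m' cop_pm'] := pfactor_coprime p_prime (ltnW m_gt1).
set n := logn p m => def_m.
have q_gt0 : (0 < p ^ n)%N by rewrite expn_gt0 prime_gt0.
case: m' cop_pm' def_m => [|[|m']] cop_pm' def_m; first by rewrite def_m in m_gt1.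
  exists n; last by rewrite def_m mul1n.
  by rewrite lt0n; apply: contraTneq m_gt1 => n0; rewrite def_m n0.
have lt_qm : (p ^ n < m)%N by rewrite def_m ltn_Pmull.
have := Cm0 _ (introT andP (conj q_gt0 lt_qm)).
rewrite [in 'C(m, _)]def_m pchar_binomial_mul_pow // => /eqP.
by rewrite -(dvdn_pcharf hp) => p_dvd; move: cop_pm'; rewrite prime_coprime ?p_dvd.
Qed.

Section Ideals.
Variable k : fieldType.
Implicit Types (I : {mpoly k[4]} -> Prop) (gs : seq {mpoly k[4]}) (f g : {mpoly k[4]}).

Lemma idealB I f g : is_ideal I -> I f -> I g -> I (f - g).
Proof. by case=> _ ID IM If Ig; apply: ID => //; rewrite -mulN1r; apply: IM. Qed.

Lemma ideal_in_ideal_gen gs : is_ideal (in_ideal_gen gs).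
Proof.
split.
- by exists (fun _ => 0); rewrite big1 // => i _; rewrite mul0r.
- move=> _ _ [cf ->] [cg ->]; exists (fun i => cf i + cg i).
  by rewrite -big_split; apply: eq_bigr => i _; rewrite mulrDl.
- move=> a _ [cf ->]; exists (fun i => a * cf i).
  by rewrite mulr_sumr; apply: eq_bigr => i _; rewrite mulrA.
Qed.

Lemma in_ideal_gen_nth gs i : (i < size gs)%N -> in_ideal_gen gs (nth 0 gs i).
Proof.
move=> lt_i; exists (fun j : 'I_(size gs) => (val j == i)%:R).
rewrite (bigD1 (Ordinal lt_i)) //= eqxx mul1r big1 ?addr0 // => j.
by rewrite -val_eqE /= => /negbTE->; rewrite mul0r.
Qed.

Lemma in_ideal_gen_sub I gs f : is_ideal I ->
  (forall i, (i < size gs)%N -> I (nth 0 gs i)) -> in_ideal_gen gs f -> I f.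
Proof.
by move=> [I0 ID IM] Igs [cs ->]; apply: (big_ind I) => // i _; apply/IM/Igs.
Qed.

End Ideals.

Section Coordinates.
Variable k : fieldType.

Lemma xv_indexK i j : (i < 2)%N -> (j < 2)%N ->
  (inord (i * 2 + j) : 'I_4) = i * 2 + j :> nat.
Proof.
by move=> lt_i lt_j; rewrite inordK //; case: i lt_i => [|[|]] //; case: j lt_j => [|[|]].
Qed.

Lemma X_xv (t : 'I_4) : 'X_t = xv k (t %/ 2) (t %% 2).
Proof. by rewrite /xv -divn_eq inord_val. Qed.

Lemma xv_comult i j : (i < 2)%N -> (j < 2)%N ->
  xv k i j \mPo comult k = xl k i 0 * xr k 0 j + xl k i 1 * xr k 1 j.
Proof.
move=> lt_i lt_j; rewrite comp_mpolyXU -tnth_nth tnth_mktuple xv_indexK //.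
by case: i lt_i => [|[|]] //; case: j lt_j => [|[|]].
Qed.

Lemma xv_inlt i j : (i < 2)%N -> (j < 2)%N -> xv k i j \mPo inlt k = xl k i j.
Proof.
move=> lt_i lt_j; rewrite comp_mpolyXU -tnth_nth tnth_mktuple xv_indexK //.
by case: i lt_i => [|[|]] //; case: j lt_j => [|[|]].
Qed.

Lemma xv_inrt i j : (i < 2)%N -> (j < 2)%N -> xv k i j \mPo inrt k = xr k i j.
Proof.
move=> lt_i lt_j; rewrite comp_mpolyXU -tnth_nth tnth_mktuple xv_indexK //.
by case: i lt_i => [|[|]] //; case: j lt_j => [|[|]].
Qed.

Lemma counit_xv i j : (i < 2)%N -> (j < 2)%N -> counit (xv k i j) = (i == j)%:R.
Proof.
move=> lt_i lt_j; rewrite /counit mevalXU /unit_pt /= xv_indexK //.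
by case: i lt_i => [|[|]] //; case: j lt_j => [|[|]].
Qed.

End Coordinates.

Section Line.
Variables (k : fieldType) (v0 v1 : k).

Definition id_entry (t : nat) : k := if (t == 0)%N || (t == 3)%N then 1 else 0.

(* The entries of N = [[v0 v1, -v0^2], [v1^2, -v0 v1]]: N ^+ 2 = 0 and N v = 0
   for v = (v0, v1). *)
Definition nil_entry (t : nat) : k :=
  if t == 0%N then v0 * v1 else if t == 1%N then - (v0 * v0)
  else if t == 2%N then v1 * v1 else - (v0 * v1).

Definition line_entry (t : nat) : {poly k} := (id_entry t)%:P + (nil_entry t)%:P * 'X.

(* The comorphism of the one-parameter subgroup t |-> 1 + t N of SL_2. *)
Definition line_comap : {rmorphism {mpoly k[4]} -> {poly k}} :=
  mmap (@polyC k) (fun t : 'I_4 => line_entry t).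

Lemma line_comapX (t : 'I_4) : line_comap 'X_t = line_entry t.
Proof. by rewrite /line_comap /= mmapX mmap1U. Qed.

Lemma line_comapC c : line_comap c%:MP = c%:P.
Proof. by rewrite /line_comap /= mmapC. Qed.

Lemma line_comap_xv i j : (i < 2)%N -> (j < 2)%N ->
  line_comap (xv k i j) = line_entry (i * 2 + j).
Proof. by move=> lt_i lt_j; rewrite line_comapX xv_indexK. Qed.

Lemma line_comap_delta i j : (i < 2)%N -> (j < 2)%N ->
  line_comap (delta k i j) = (id_entry (i * 2 + j))%:P.
Proof.
by case: i => [|[|]] //; case: j => [|[|]] // _ _; rewrite /delta /= ?rmorph0 ?rmorph1.
Qed.

Lemma counit_line_comap f : counit f = (line_comap f).[0].
Proof.
apply: (mpoly_rmorph_ext (F := meval (unit_pt k)) (G := horner_eval 0 \o line_comap)) => [c|t].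
  by rewrite /= mevalC mmapC /horner_eval hornerC.
rewrite /= mevalXU line_comapX /horner_eval /line_entry.
by rewrite hornerD hornerMX !hornerC mulr0 addr0.
Qed.

Lemma line_entry_frob p e t : p \in [pchar k] ->
  line_entry t ^+ (p ^ e) = (id_entry t)%:P + (nil_entry t ^+ (p ^ e))%:P * 'X^(p ^ e).
Proof.
move=> hp; have hpX : p \in [pchar {poly k}] by rewrite pchar_poly.
have id_exp : id_entry t ^+ (p ^ e) = id_entry t.
  rewrite /id_entry; case: ifP => _; rewrite ?expr1n // expr0n expn_eq0.
  by rewrite eqn0Ngt prime_gt0 ?(pcharf_prime hp).
by rewrite /line_entry exprDn_pchar ?pchar_nat_pow // exprMn -!rmorphXn id_exp.
Qed.

Lemma line_comap_Xpow (J : {mpoly k[4]} -> Prop) q : (v0 != 0) || (v1 != 0) ->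
  is_ideal J -> J (xv k 0 1 ^+ q) -> J (xv k 1 0 ^+ q) -> exists2 g, J g & line_comap g = 'X^q.
Proof.
move=> v_neq0 [_ _ JM] Jx01 Jx10.
have scaleX (c : k) : c != 0 -> (c ^+ q)^-1%:P * (c%:P * 'X) ^+ q = 'X^q.
  by move=> c_neq0; rewrite exprMn mulrA -polyC_exp -polyCM mulVf ?expf_neq0 ?mul1r.
case/orP: v_neq0 => v_neq0.
  exists ((nil_entry 1 ^+ q)^-1%:MP * xv k 0 1 ^+ q); first exact: JM.
  rewrite rmorphM rmorphXn line_comapC line_comap_xv // /line_entry /id_entry /= polyC0 add0r.
  by apply: scaleX; rewrite oppr_eq0 mulf_neq0.
exists ((nil_entry 2 ^+ q)^-1%:MP * xv k 1 0 ^+ q); first exact: JM.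
rewrite rmorphM rmorphXn line_comapC line_comap_xv // /line_entry /id_entry /= polyC0 add0r.
by apply: scaleX; rewrite mulf_neq0.
Qed.

Lemma line_comap_H_gens p n i : p \in [pchar k] -> (i < size (H_gens p v0 v1 n))%N ->
  'X^(p ^ n) %| line_comap (nth 0 (H_gens p v0 v1 n) i).
Proof.
move=> hp; have frob_gen i' j' : (i' < 2)%N -> (j' < 2)%N ->
    'X^(p ^ n) %| line_comap (xv k i' j' ^+ (p ^ n) - delta k i' j').
  move=> lt_i lt_j; rewrite rmorphB rmorphXn line_comap_xv // line_comap_delta //.
  by rewrite line_entry_frob // addrC addKr dvdp_mull.
case: i => [|[|[|[|i]]]] /= lt_i; [exact: frob_gen | | | exact: frob_gen | ].
- by have := frob_gen 0%N 1%N isT isT; rewrite /delta /= subr0.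
- by have := frob_gen 1%N 0%N isT isT; rewrite /delta /= subr0.
suff -> : line_comap (nth 0 (H_gens p v0 v1 n) i.+4) = 0 by rewrite dvdp0.
case: i lt_i => [|[|[|[|i]]]] //= _.
all: rewrite /detp !(rmorphB, rmorphD, rmorphM, rmorph1, line_comapC).
all: rewrite ?rmorphN ?line_comap_xv // /line_entry /id_entry /nil_entry /=; ring.
Qed.

Definition line_entry2 (i : 'I_8) : {poly {poly k}} :=
  if (i < 4)%N then (line_entry i)%:P else map_poly polyC (line_entry (i - 4)).

(* The comorphism of (s, t) |-> (1 + s N, 1 + t N), with s = 'Y and t = 'X. *)
Definition line_comap2 : {rmorphism {mpoly k[8]} -> {poly {poly k}}} :=
  mmap (@polyC {poly k} \o @polyC k) line_entry2.

Lemma line_entry2_inl a : (a < 4)%N -> line_entry2 (inord a) = (line_entry a)%:P.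
Proof. by move=> lt_a; rewrite /line_entry2 inordK ?lt_a // (ltn_trans lt_a). Qed.

Lemma line_entry2_inr a : (a < 4)%N ->
  line_entry2 (inord (4 + a)) = map_poly polyC (line_entry a).
Proof. by move=> lt_a; rewrite /line_entry2 inordK ?ltn_add2l // ltnNge leq_addr /= addKn. Qed.

Lemma line_comap2_inlt g : line_comap2 (g \mPo inlt k) = (line_comap g)%:P.
Proof.
apply: (mpoly_rmorph_ext (F := line_comap2 \o comp_mpoly (inlt k))
  (G := polyC \o line_comap)) => [c|t] /=.
  by rewrite comp_mpolyC !mmapC.
rewrite comp_mpolyXU -tnth_nth tnth_mktuple /xl -divn_eq !mmapX !mmap1U.
by rewrite line_entry2_inl ?ltn_ord.
Qed.

Lemma line_comap2_inrt g : line_comap2 (g \mPo inrt k) = map_poly polyC (line_comap g).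
Proof.
apply: (mpoly_rmorph_ext (F := line_comap2 \o comp_mpoly (inrt k))
  (G := map_poly polyC \o line_comap)) => [c|t] /=.
  by rewrite comp_mpolyC !mmapC map_polyC.
rewrite comp_mpolyXU -tnth_nth tnth_mktuple /xr -divn_eq !mmapX !mmap1U.
by rewrite line_entry2_inr ?ltn_ord.
Qed.

Lemma line_entry_shift t :
  (map_poly (polyC \o polyC) (line_entry t)).['Y + 'X] =
  (id_entry t)%:P%:P + (nil_entry t)%:P%:P * ('Y + 'X).
Proof.
rewrite /line_entry rmorphD rmorphM /= !map_polyC map_polyX.
by rewrite hornerD hornerM !hornerC hornerX.
Qed.

Lemma line_comap2_comult f :
  line_comap2 (f \mPo comult k) = (map_poly (polyC \o polyC) (line_comap f)).['Y + 'X].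
Proof.
apply: (mpoly_rmorph_ext (F := line_comap2 \o comp_mpoly (comult k))
  (G := horner_eval ('Y + 'X) \o map_poly (polyC \o polyC) \o line_comap)) => [c|t] /=.
  by rewrite comp_mpolyC !mmapC map_polyC /horner_eval hornerC.
rewrite comp_mpolyXU -tnth_nth tnth_mktuple mmapX mmap1U /horner_eval line_entry_shift /xl /xr.
case: t => [[|[|[|[|]]]] lt_t] //=; rewrite rmorphD !rmorphM /= !mmapX !mmap1U.
all: rewrite !line_entry2_inr // !line_entry2_inl // /line_entry /id_entry /nil_entry /=.
all: rewrite !rmorphD !rmorphM /= !map_polyC map_polyX; ring.
Qed.

Lemma line_comap2_Jideal (I : {mpoly k[4]} -> Prop) m h :
  (forall g, I g -> 'X^m %| line_comap g) -> in_Jideal I h ->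
  exists A B : {poly {poly k}}, line_comap2 h = A * 'Y ^+ m + B * 'X ^+ m.
Proof.
move=> Xm_dvd [l [a [b [f [g [If Ig ->]]]]]].
exists (\sum_(i < l) line_comap2 (a i) * (line_comap (f i) %/ 'X^m)%:P).
exists (\sum_(i < l) line_comap2 (b i) * map_poly polyC (line_comap (g i) %/ 'X^m)).
rewrite rmorph_sum !mulr_suml -big_split /=; apply: eq_bigr => i _.
rewrite rmorphD !rmorphM line_comap2_inlt line_comap2_inrt.
rewrite -{1}(divpK (Xm_dvd _ (If i))) -{1}(divpK (Xm_dvd _ (Ig i))).
by rewrite !rmorphM rmorphXn /= map_polyXn !mulrA.
Qed.

End Line.

Section LineIdeal.
Variables (k : fieldType) (v0 v1 u0 u1 : k).
Hypothesis huv : u0 * v0 + u1 * v1 = 1.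

Lemma line_dir_neq0 : (v0 != 0) || (v1 != 0).
Proof.
apply/contraT; rewrite negb_or !negbK => /andP[/eqP v0_0 /eqP v1_0].
by move: huv; rewrite v0_0 v1_0 !mulr0 addr0 => /esym/eqP; rewrite oner_eq0.
Qed.

(* Its image under line_comap is (u0 v0 + u1 v1)^2 'X. *)
Definition line_coord : {mpoly k[4]} :=
  u0%:MP * u1%:MP * (xv k 0 0 - xv k 1 1) - u0%:MP * u0%:MP * xv k 0 1
  + u1%:MP * u1%:MP * xv k 1 0.

Definition line_lift : {rmorphism {poly k} -> {mpoly k[4]}} :=
  horner_morph (fun c : k => mulrC line_coord c%:MP).

Lemma line_liftX : line_lift 'X = line_coord.
Proof. exact: horner_morphX. Qed.

Lemma line_liftC c : line_lift c%:P = c%:MP.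
Proof. exact: horner_morphC. Qed.

Lemma line_comap_coord : line_comap v0 v1 line_coord = 'X.
Proof.
rewrite /line_coord !(rmorphD, rmorphN, rmorphB, rmorphM, line_comapC) !line_comap_xv //.
apply: (eq_of_subr_mul1B (e := (u0 * v0 + u1 * v1)%:P)
  (q := - ((u0 * v0 + u1 * v1 + 1)%:P * 'X))).
  by rewrite huv.
rewrite /line_entry /id_entry /nil_entry /=; ring.
Qed.

Lemma line_comap_lift g : line_comap v0 v1 (line_lift g) = g.
Proof.
elim/poly_ind: g => [|g c IH]; first by rewrite !rmorph0.
by rewrite !rmorphD !rmorphM line_liftX line_liftC line_comapC IH line_comap_coord.
Qed.

Definition fixv_rel0 : {mpoly k[4]} := v0%:MP * (xv k 0 0 - 1) + v1%:MP * xv k 0 1.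
Definition fixv_rel1 : {mpoly k[4]} := v1%:MP * (xv k 1 1 - 1) + v0%:MP * xv k 1 0.
Definition trace_rel : {mpoly k[4]} := xv k 1 1 - (2 - xv k 0 0).

Definition line_ideal_sub (J : {mpoly k[4]} -> Prop) : Prop :=
  [/\ J fixv_rel0, J fixv_rel1 & J trace_rel].

Section IdealContainingLine.
Variable J : {mpoly k[4]} -> Prop.
Hypotheses (idealJ : is_ideal J) (lineJ : line_ideal_sub J).

Lemma line_ideal_comb a b c : J (a * fixv_rel0 + b * fixv_rel1 + c * trace_rel).
Proof. by case: idealJ lineJ => _ JD JM [J0 J1 J2]; apply/JD/JM/J2/JD; apply: JM. Qed.

Lemma line_lift_comapX_eqmod (t : 'I_4) : J ('X_t - line_lift (line_comap v0 v1 'X_t)).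
Proof.
rewrite line_comapX /line_entry rmorphD rmorphM line_liftX !line_liftC X_xv.
pose U0 := u0%:MP_[4]; pose U1 := u1%:MP_[4]; pose V0 := v0%:MP_[4]; pose V1 := v1%:MP_[4].
pose E := (u0 * v0 + u1 * v1)%:MP_[4].
(* [ring] cannot use [huv]: check x = y as x - y = (1 - E) * q instead. *)
have eq_mod (q x y : {mpoly k[4]}) : x - y = (1 - E) * q -> x = y.
  exact/eq_of_subr_mul1B/congr1/huv.
case: t => [[|[|[|[|t]]]] lt_t] //=; rewrite /id_entry /nil_entry /=.
- rewrite (_ : _ - _ = (U0 - U0 * U1 * V1) * fixv_rel0 + (- (U1 * U1 * V1)) * fixv_rel1 +
    (U1 * V1) * trace_rel); first exact: line_ideal_comb.
  apply: (eq_mod ((1 + E) * (xv k 0 0 - 1) - fixv_rel0 * U0 - U1 * V1 * trace_rel)).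
  by rewrite /U0 /U1 /V0 /V1 /E /fixv_rel0 /fixv_rel1 /trace_rel /line_coord; ring.
- rewrite (_ : _ - _ = (U1 + U0 * U1 * V0) * fixv_rel0 + (U1 * U1 * V0) * fixv_rel1 +
    (- (U1 * V0)) * trace_rel); first exact: line_ideal_comb.
  apply: (eq_mod ((1 + E) * xv k 0 1 - fixv_rel0 * U1 + U1 * V0 * trace_rel)).
  by rewrite /U0 /U1 /V0 /V1 /E /fixv_rel0 /fixv_rel1 /trace_rel /line_coord; ring.
- rewrite (_ : _ - _ = (U0 * U0 * V1) * fixv_rel0 + (U0 + U0 * U1 * V1) * fixv_rel1 +
    (- (U0 * V1)) * trace_rel); first exact: line_ideal_comb.
  apply: (eq_mod ((1 + E) * xv k 1 0 - fixv_rel1 * U0 + U0 * V1 * trace_rel)).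
  by rewrite /U0 /U1 /V0 /V1 /E /fixv_rel0 /fixv_rel1 /trace_rel /line_coord; ring.
- rewrite (_ : _ - _ = (- (U0 * U0 * V0)) * fixv_rel0 + (U1 - U0 * U1 * V0) * fixv_rel1 +
    (U0 * V0) * trace_rel); first exact: line_ideal_comb.
  apply: (eq_mod ((1 + E) * (xv k 1 1 - 1) - fixv_rel1 * U1 - U0 * V0 * trace_rel)).
  by rewrite /U0 /U1 /V0 /V1 /E /fixv_rel0 /fixv_rel1 /trace_rel /line_coord; ring.
Qed.

Lemma line_lift_comap_eqmod f : J (f - line_lift (line_comap v0 v1 f)).
Proof.
case: idealJ => _ JD JM; elim/mpoly_ring_ind: f => [c|t|f g Jf Jg|f g Jf Jg].
- by rewrite line_comapC line_liftC subrr; case: idealJ.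
- exact: line_lift_comapX_eqmod.
- by rewrite !rmorphD opprD addrACA; apply: JD.
rewrite !rmorphM (_ : f * g - _ = f * (g - line_lift (line_comap v0 v1 g)) +
  line_lift (line_comap v0 v1 g) * (f - line_lift (line_comap v0 v1 f))); last by ring.
by apply: JD; apply: JM.
Qed.

Lemma line_ideal_sub_dvd g f : J g -> line_comap v0 v1 g %| line_comap v0 v1 f -> J f.
Proof.
move=> Jg /dvdpP[h phi_f]; case: idealJ => _ JD JM.
rewrite -(subrK (line_lift (line_comap v0 v1 f)) f); apply: JD.
  exact: line_lift_comap_eqmod.
rewrite phi_f rmorphM; apply: JM.
rewrite -[line_lift _](subKr g); apply: idealB => //; exact: line_lift_comap_eqmod.
Qed.

End IdealContainingLine.

Lemma line_ideal_sub_det J : is_ideal J ->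
  J fixv_rel0 -> J fixv_rel1 -> J (detp k - 1) -> line_ideal_sub J.
Proof.
move=> idealJ J0 J1 Jdet; split => //; have [_ JD JM] := idealJ.
have Jrel (c : k) a b r r' : J r -> J r' -> J (c%:MP * (detp k - 1) - a * r + b * r').
  by move=> Jr Jr'; apply: (JD); [apply: idealB => //; apply: (JM) | apply: (JM)].
have Jcomb := JD _ _ (JM u0%:MP _ (Jrel v0 (xv k 1 1 - 1) (xv k 0 1) _ _ J0 J1))
                     (JM u1%:MP _ (Jrel v1 (xv k 0 0 - 1) (xv k 1 0) _ _ J1 J0)).
(* [v0 * trace_rel] and [v1 * trace_rel] lie in J; combine them with u0 and u1. *)
apply: (eq_ind _ J Jcomb); apply/esym.
apply: (eq_of_subr_mul1B (e := (u0 * v0 + u1 * v1)%:MP) (q := trace_rel)).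
  by rewrite huv.
by rewrite /trace_rel /fixv_rel0 /fixv_rel1 /detp; ring.
Qed.

Lemma line_ideal_sub_H_gens p n : line_ideal_sub (in_ideal_gen (H_gens p v0 v1 n)).
Proof.
by split; [exact: (in_ideal_gen_nth (i := 5)) | exact: (in_ideal_gen_nth (i := 6)) |
  exact: (in_ideal_gen_nth (i := 7))].
Qed.

Lemma in_H_gens_line_comapP p n f : p \in [pchar k] ->
  in_ideal_gen (H_gens p v0 v1 n) f <-> 'X^(p ^ n) %| line_comap v0 v1 f.
Proof.
move=> hp; split.
  apply: (in_ideal_gen_sub (I := fun f => 'X^(p ^ n) %| line_comap v0 v1 f)) => [|i].
    2: exact: line_comap_H_gens.
  split=> [|f' g|a f']; rewrite ?rmorph0 ?dvdp0 // ?rmorphD ?rmorphM; first exact: dvdp_add.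
  exact: dvdp_mull.
set gs := H_gens p v0 v1 n.
have [g gs_g <-] := line_comap_Xpow line_dir_neq0 (ideal_in_ideal_gen gs)
  (in_ideal_gen_nth (gs := gs) (i := 1) isT) (in_ideal_gen_nth (gs := gs) (i := 2) isT).
by apply: (line_ideal_sub_dvd (ideal_in_ideal_gen _) _ gs_g); apply: line_ideal_sub_H_gens.
Qed.

End LineIdeal.

Section Subgroup.
Variables (k : fieldType) (I : {mpoly k[4]} -> Prop).
Hypothesis idealI : is_ideal I.

Lemma in_Jideal0 : in_Jideal I 0.
Proof.
exists 0%N, (fun _ => 0), (fun _ => 0), (fun _ => 0), (fun _ => 0).
by split=> [[]|[]|]; rewrite // big_ord0.
Qed.

Lemma unipotent_fixed_vector : unipotent I ->
  exists v0 v1 : k, [/\ (v0 != 0) || (v1 != 0), I (fixv_rel0 v0 v1) & I (fixv_rel1 v0 v1)].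
Proof.
move=> unipI; have sum2 (V : zmodType) (F : 'I_2 -> V) : \sum_(j < 2) F j = F ord0 + F ord_max.
  by rewrite big_ord_recr big_ord1; congr (F _ + _); apply: val_inj.
have comod_x : is_comodule I (fun i j : 'I_2 => xv k i j).
  split=> i j; last by rewrite counit_xv.
  rewrite xv_comult // sum2 !xv_inlt // !xv_inrt // subrr; exact: in_Jideal0.
have [v [[i0 v_i0] Iv]] := unipI 2%N _ isT comod_x.
exists (v ord0), (v ord_max); split.
- case: i0 v_i0 => [[|[|//]] lt_i0] v_i0.
    by rewrite (_ : ord0 = Ordinal lt_i0) ?v_i0 //; apply: val_inj.
  by rewrite (_ : ord_max = Ordinal lt_i0) ?v_i0 ?orbT //; apply: val_inj.
- by apply: (eq_ind _ I (Iv ord0)); rewrite sum2 /fixv_rel0 /=; ring.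
- by apply: (eq_ind _ I (Iv ord_max)); rewrite sum2 /fixv_rel1 /=; ring.
Qed.

Lemma unipotent_det : unipotent I -> I (detp k - 1).
Proof.
move=> unipI; have comod_det : is_comodule I (fun _ _ : 'I_1 => detp k).
  split=> i j; last first.
    rewrite (ord1 i) (ord1 j) /counit /detp !(mevalB, mevalM) -!/(counit _) !counit_xv //=.
    by rewrite mulr1 mul0r subr0.
  rewrite big_ord1 /detp !(rmorphB, rmorphM) /= !xv_comult // !xv_inlt // !xv_inrt //.
  by rewrite (_ : _ - _ = 0); [exact: in_Jideal0 | ring].
have [w [[i w_i] Iw]] := unipI 1%N _ isT comod_det.
move: w_i (Iw ord0); rewrite (ord1 i) big_ord1 => w_neq0 Iw0.
rewrite (_ : detp k - 1 = (w ord0)^-1%:MP * ((w ord0)%:MP * detp k - (w ord0)%:MP)).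
  by case: idealI => _ _; apply.
by rewrite mulrBr mulrA -!rmorphM mulVf // rmorph1 mul1r.
Qed.

Lemma unipotent_line_ideal_sub : unipotent I ->
  exists v0 v1 u0 u1 : k, u0 * v0 + u1 * v1 = 1 /\ line_ideal_sub v0 v1 I.
Proof.
move=> unipI; have [v0 [v1 [v_neq0 I0 I1]]] := unipotent_fixed_vector unipI.
have [u0 [u1 huv]] : exists u0 u1 : k, u0 * v0 + u1 * v1 = 1.
  by case/orP: v_neq0 => v_neq0; [exists v0^-1, 0 | exists 0, v1^-1];
    rewrite ?mulVf // ?mul0r ?addr0 ?add0r.
exists v0, v1, u0, u1; split => //.
by apply: (line_ideal_sub_det huv) => //; apply: unipotent_det.
Qed.

Section LineSubgroup.
Variables (v0 v1 u0 u1 : k).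
Hypotheses (huv : u0 * v0 + u1 * v1 = 1) (lineI : line_ideal_sub v0 v1 I).

Lemma line_comap_ideal_principal q : I (xv k 0 1 ^+ q) -> I (xv k 1 0 ^+ q) ->
  exists m, forall f, I f <-> 'X^m %| line_comap v0 v1 f.
Proof.
move=> Ix01 Ix10; have [_ ID IM] := idealI.
pose Iphi g := exists2 f, I f & line_comap v0 v1 f = g.
have Iphi_Xq : Iphi 'X^q by apply: line_comap_Xpow (line_dir_neq0 huv) idealI Ix01 Ix10.
have [m [[fm Ifm phi_fm] Xm_gen]] : exists m, Iphi 'X^m /\ forall g, Iphi g -> 'X^m %| g.
  apply: ideal_Xpow_principal Iphi_Xq => [_ _ [f If <-] [g Ig <-]|a _ [g Ig <-]].
    by exists (f + g); [apply: ID | rewrite rmorphD].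
  by exists (line_lift u0 u1 a * g); [apply: IM | rewrite rmorphM line_comap_lift].
exists m => f; split => [If|]; first by apply: Xm_gen; exists f.
by rewrite -phi_fm; apply: (line_ideal_sub_dvd huv idealI lineI Ifm).
Qed.

Lemma line_exponent_pchar_pow p m : p \in [pchar k] ->
  (forall f, I f <-> 'X^m %| line_comap v0 v1 f) ->
  (forall f, I f -> counit f = 0) -> (forall f, I f -> in_Jideal I (f \mPo comult k)) ->
  nontrivial_sub I -> exists2 n, (0 < n)%N & m = (p ^ n)%N.
Proof.
move=> hp Im counitI comultI [f0 [counit_f0 notIf0]].
have phi_fm : line_comap v0 v1 (line_lift u0 u1 'X^m) = 'X^m by exact: line_comap_lift.
have Ifm : I (line_lift u0 u1 'X^m) by rewrite Im phi_fm.
have m_gt1 : (1 < m)%N.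
  rewrite ltnNge; apply/negP => le_m1; apply: notIf0; rewrite Im.
  apply: dvdp_trans (dvdp_exp2l 'X le_m1) _.
  by rewrite expr1 -['X]subr0 -polyC0 dvdp_XsubCl /root -counit_line_comap counit_f0.
apply: (pchar_pow_of_binomials hp m_gt1) => j lt_j.
have [A [B]] := line_comap2_Jideal (fun g Ig => proj1 (Im g) Ig) (comultI _ Ifm).
rewrite line_comap2_comult phi_fm map_polyXn hornerXn.
exact: binomial_coef_vanish.
Qed.

End LineSubgroup.

End Subgroup.

Theorem mainTheorem4 (k : fieldType) (p : nat) (hp : prime p) (hchar : p \in [pchar k])
  (I : {mpoly k[4]} -> Prop) :
  infinitesimal_subgroup p I -> unipotent I -> nontrivial_sub I ->
  exists (s1 s2 : k) (n : nat),
    [/\ (s1 != 0) || (s2 != 0), (1 <= n)%N &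
        forall f, I f <-> in_ideal_gen (H_gens p s1 s2 n) f].
Proof.
move=> [idealI [n0 [frobI counitI comultI _]]] unipI nontrivI.
have [v0 [v1 [u0 [u1 [huv lineI]]]]] := unipotent_line_ideal_sub idealI unipI.
have [Ix01 Ix10] : I (xv k 0 1 ^+ (p ^ n0)) /\ I (xv k 1 0 ^+ (p ^ n0)).
  by split; [have := frobI 0%N 1%N isT isT | have := frobI 1%N 0%N isT isT];
    rewrite /delta /= subr0.
have [m Im] := line_comap_ideal_principal idealI huv lineI Ix01 Ix10.
have [n n_gt0 def_m] := line_exponent_pchar_pow huv hchar Im counitI comultI nontrivI.
exists v0, v1, n; split => //; first exact: line_dir_neq0 huv.
move=> f; rewrite def_m in Im; apply: iff_trans (Im f) _.
exact: iff_sym (in_H_gens_line_comapP huv n f hchar).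
Qed.
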